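(* Let $\mathbf t_1,\mathbf t_2$ be hyper-terms with $\mathrm{supp}(\mathbf t_1)\cap\mathrm{supp}(\mathbf t_2)=\emptyset$ and $Q$ a post hyper-assertion. Then $$\mathrm{wp}\,\mathbf t_1\,\{\lambda\mathbf v.\ \mathrm{wp}\,\mathbf t_2\,\{\lambda\mathbf w.\ Q(\mathbf v\uplus\mathbf w)\}\}\ \dashv\vdash\ \mathrm{wp}\,(\mathbf t_1\uplus\mathbf t_2)\,\{Q\}.$$
   Context: Setting. $\mathrm{Val}=\mathbb{Z}$; $\mathrm{PVar}$ is a countably infinite set of program variables; a store is a function $s:\mathrm{PVar}\to\mathrm{Val}$; indices are $\mathrm{Idx}=\mathbb{N}$. Terms of a first-order imperative language are generated by $t ::= v \mid x \mid * \mid t\oplus t \mid \mathtt{skip}\mid x:=t \mid t;t \mid \mathtt{if}\ t\ \mathtt{then}\ t\ \mathtt{else}\ t \mid \mathtt{while}\ t\ \mathtt{do}\ t$, with a nondeterministic big-step semantics $t,s\Downarrow v,s'$. A hyper-term $\mathbf t$ is a finitely supported partial function from $\mathrm{Idx}$ to terms; a hyper-store is a total function $\mathbf s:\mathrm{Idx}\to\mathrm{Store}$; a hyper-return-value is a finitely supported partial function $\mathbf v:\mathrm{Idx}\rightharpoonup\mathrm{Val}$. $\uplus$ denotes union of partial maps with disjoint supports. $\mathbf t,\mathbf s\Downarrow\mathbf v,\mathbf s'$ holds iff for every $i\in\mathrm{supp}(\mathbf t)$, $\mathbf t(i),\mathbf s(i)\Downarrow\mathbf v(i),\mathbf s'(i)$,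 and for every $i\notin\mathrm{supp}(\mathbf t)$, $\mathbf s'(i)=\mathbf s(i)$ and $\mathbf v(i)$ is undefined. A hyper-assertion is a predicate on hyper-stores; a post hyper-assertion is an upward-closed map $Q$ from hyper-return-values to hyper-assertions (if $Q(\mathbf v)(\mathbf s)$ and $\mathbf v'$ agrees with $\mathbf v$ on $\mathrm{supp}(\mathbf v)$ then $Q(\mathbf v')(\mathbf s)$). $P\dashv\vdash R$ means $\forall\mathbf s.\ P(\mathbf s)\Leftrightarrow R(\mathbf s)$. $\mathrm{wp}\,\mathbf t\,\{Q\}(\mathbf s):\iff\forall\mathbf v,\mathbf s'.\ (\mathbf t,\mathbf s\Downarrow\mathbf v,\mathbf s')\Rightarrow Q(\mathbf v)(\mathbf s')$. *)

From Stdlib Require Import ZArith.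
Open Scope Z_scope.

Definition Val := Z.
Definition PVar := nat.
Definition Store := PVar -> Val.
Definition Idx := nat.

Inductive term : Type :=
| TVal   : Val -> term
| TVar   : PVar -> term
| TNondet : term
| TBin   : (Val -> Val -> Val) -> term -> term -> term
| TSkip  : term
| TAssign : PVar -> term -> term
| TSeq   : term -> term -> term
| TIf    : term -> term -> term -> term
| TWhile : term -> term -> term.

Definition upd (s : Store) (x : PVar) (v : Val) : Store :=
  fun y => if Nat.eqb y x then v else s y.

(* Nondeterministic big-step semantics  t, s ⇓ v, s'.
   Conventions: skip, assignment and a terminated loop return 0;
   a guard is true iff it evaluates to a nonzero value. *)
Inductive bigstep : term -> Store -> Val -> Store -> Prop :=
| BS_Val : forall v s, bigstep (TVal v) s v s
| BS_Var : forall x s, bigstep (TVar x) s (s x) s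
| BS_Nondet : forall n s, bigstep TNondet s n s
| BS_Bin : forall op t1 t2 s s1 s2 v1 v2,
    bigstep t1 s v1 s1 -> bigstep t2 s1 v2 s2 ->
    bigstep (TBin op t1 t2) s (op v1 v2) s2
| BS_Skip : forall s, bigstep TSkip s 0 s
| BS_Assign : forall x t s v s1,
    bigstep t s v s1 -> bigstep (TAssign x t) s 0 (upd s1 x v)
| BS_Seq : forall t1 t2 s s1 s2 v1 v2,
    bigstep t1 s v1 s1 -> bigstep t2 s1 v2 s2 -> bigstep (TSeq t1 t2) s v2 s2
| BS_IfT : forall b t1 t2 s s1 s2 vb v,
    bigstep b s vb s1 -> vb <> 0 -> bigstep t1 s1 v s2 ->
    bigstep (TIf b t1 t2) s v s2
| BS_IfF : forall b t1 t2 s s1 s2 v,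
    bigstep b s 0 s1 -> bigstep t2 s1 v s2 ->
    bigstep (TIf b t1 t2) s v s2
| BS_WhileF : forall b t s s1,
    bigstep b s 0 s1 -> bigstep (TWhile b t) s 0 s1
| BS_WhileT : forall b t s s1 s2 s3 vb vt v,
    bigstep b s vb s1 -> vb <> 0 -> bigstep t s1 vt s2 ->
    bigstep (TWhile b t) s2 v s3 -> bigstep (TWhile b t) s v s3.

Definition fin_supp {A : Type} (f : Idx -> option A) : Prop :=
  exists N : nat, forall i : nat, (N <= i)%nat -> f i = None.

Definition hterm := { t : Idx -> option term | fin_supp t }.
Definition hval  := { v : Idx -> option Val  | fin_supp v }.
Definition hstore := Idx -> Store.
Definition hassn := hstore -> Prop.
Definition post := hval -> hassn.

(* union of partial maps (the disjoint union ⊎ when supports are disjoint) *)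
Definition punion {A : Type} (f g : Idx -> option A) : Idx -> option A :=
  fun i => match f i with Some a => Some a | None => g i end.

Lemma fin_supp_punion {A : Type} (f g : Idx -> option A) :
  fin_supp f -> fin_supp g -> fin_supp (punion f g).
Proof.
  intros [N HN] [M HM]. exists (N + M)%nat. intros i Hi.
  unfold punion. rewrite HN by (apply (Nat.le_trans _ (N + M)); [apply Nat.le_add_r | exact Hi]).
  apply HM. apply (Nat.le_trans _ (N + M)); [rewrite Nat.add_comm; apply Nat.le_add_r | exact Hi].
Qed.

Definition hunion {A : Type} (f g : { h : Idx -> option A | fin_supp h })
  : { h : Idx -> option A | fin_supp h } :=
  exist _ (punion (proj1_sig f) (proj1_sig g))
        (fin_supp_punion _ _ (proj2_sig f) (proj2_sig g)).

Definition disjoint_supp (t1 t2 : hterm) : Prop :=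
  forall i, proj1_sig t1 i = None \/ proj1_sig t2 i = None.

Definition hbigstep (t : hterm) (s : hstore) (v : hval) (s' : hstore) : Prop :=
  forall i : Idx,
    match proj1_sig t i with
    | Some ti => exists vi, proj1_sig v i = Some vi /\ bigstep ti (s i) vi (s' i)
    | None => s' i = s i /\ proj1_sig v i = None
    end.

Definition upward_closed (Q : post) : Prop :=
  forall (v v' : hval) (s : hstore),
    (forall i x, proj1_sig v i = Some x -> proj1_sig v' i = Some x) ->
    Q v s -> Q v' s.

Definition wp (t : hterm) (Q : post) : hassn :=
  fun s => forall (v : hval) (s' : hstore), hbigstep t s v s' -> Q v s'.

Definition bientails (P R : hassn) : Prop := forall s, P s <-> R s.


(* Under disjoint supports the two components run on separate indices, so a run
   of [t1 ⊎ t2] is a run of [t1] followed by a run of [t2]: the intermediate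
   hyper-store takes the final store on the support of [t1] and the initial one
   elsewhere, and the result splits into its restrictions to the two supports.
   Upward closure of [Q] absorbs the values of the union run that lie outside
   both supports, which the restrictions forget. *)

Definition prestrict {A B : Type} (f : Idx -> option A) (g : Idx -> option B)
  : Idx -> option A :=
  fun i => match g i with Some _ => f i | None => None end.

Lemma fin_supp_prestrict {A B : Type} (f : Idx -> option A) (g : Idx -> option B) :
  fin_supp f -> fin_supp (prestrict f g).
Proof.
  intros [N HN]. exists N. intros i Hi. unfold prestrict.
  destruct (g i); [apply HN; exact Hi | reflexivity].
Qed.

Definition hrestrict {A B : Type} (f : { h : Idx -> option A | fin_supp h })
  (g : Idx -> option B) : { h : Idx -> option A | fin_supp h } :=
  exist _ (prestrict (proj1_sig f) g) (fin_supp_prestrict _ g (proj2_sig f)).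

Lemma punion_prestrict_sub {A B : Type} (f : Idx -> option A) (g1 g2 : Idx -> option B)
  (i : Idx) (x : A) :
  punion (prestrict f g1) (prestrict f g2) i = Some x -> f i = Some x.
Proof.
  unfold punion, prestrict.
  destruct (g1 i), (g2 i), (f i); congruence.
Qed.

Definition mid_hstore (t : hterm) (s s' : hstore) : hstore :=
  fun i => match proj1_sig t i with Some _ => s' i | None => s i end.

Section DisjointUnion.

Variables t1 t2 : hterm.
Hypothesis disjoint12 : disjoint_supp t1 t2.

Lemma hbigstep_hunion_split (s s' : hstore) (v : hval) :
  hbigstep (hunion t1 t2) s v s' ->
  hbigstep t1 s (hrestrict v (proj1_sig t1)) (mid_hstore t1 s s') /\
  hbigstep t2 (mid_hstore t1 s s') (hrestrict v (proj1_sig t2)) s'.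
Proof.
  intros Hrun. split; intro i; specialize (Hrun i);
    destruct (disjoint12 i) as [E | E];
    unfold mid_hstore, hrestrict, prestrict in *; simpl in *;
    unfold punion in Hrun;
    destruct (proj1_sig t1 i), (proj1_sig t2 i); try discriminate;
    try tauto; destruct Hrun as [-> _]; tauto.
Qed.

Lemma hbigstep_hunion_seq (s s1 s2 : hstore) (v1 v2 : hval) :
  hbigstep t1 s v1 s1 -> hbigstep t2 s1 v2 s2 ->
  hbigstep (hunion t1 t2) s (hunion v1 v2) s2.
Proof.
  intros Hrun1 Hrun2 i. specialize (Hrun1 i). specialize (Hrun2 i).
  simpl. unfold punion.
  destruct (proj1_sig t1 i) eqn:E1.
  - destruct (disjoint12 i) as [E | E]; [congruence |].
    rewrite E in Hrun2. destruct Hrun2 as [-> _].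
    destruct Hrun1 as [vi [-> Hstep]]. exists vi. tauto.
  - destruct Hrun1 as [Hs ->]. rewrite Hs in Hrun2. exact Hrun2.
Qed.

End DisjointUnion.

Theorem mainTheorem8 (t1 t2 : hterm) (Q : post) :
  disjoint_supp t1 t2 ->
  upward_closed Q ->
  bientails (wp t1 (fun v => wp t2 (fun w => Q (hunion v w))))
            (wp (hunion t1 t2) Q).
Proof.
  intros Hdisj HQ s. split.
  - intros Hwp v s' Hrun.
    destruct (hbigstep_hunion_split t1 t2 Hdisj s s' v Hrun) as [Hrun1 Hrun2].
    apply (HQ (hunion (hrestrict v (proj1_sig t1)) (hrestrict v (proj1_sig t2)))).
    + intros i x. apply punion_prestrict_sub.
    + exact (Hwp _ _ Hrun1 _ _ Hrun2).
  - intros Hwp v1 s1 Hrun1 v2 s2 Hrun2.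
    exact (Hwp _ _ (hbigstep_hunion_seq t1 t2 Hdisj s s1 s2 v1 v2 Hrun1 Hrun2)).
Qed.
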